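(* Let $A=[0,1]\subseteq\mathbb R$ with the usual order, let $\neg x=\sqrt{1-x^2}$, and define a binary operation on $A$ by $x\cdot 1=x$ and $x\cdot y=\max(y-\neg x,\,0)$ for $y<1$. Then: (i) multiplication is monotone on the left: for all $x,y,z\in A$, $x\le y$ implies $z\cdot x\le z\cdot y$; (ii) for every $x\in(0,1)$, putting $y=1-\neg x$, there is no element $w\in A$ such that for all $z\in A$: $z\le w$ iff $x\cdot z\le y$. In particular, there is no binary operation $\backslash$ on $A$ with $x\cdot z\le y\iff z\le x\backslash y$ for all $x,y,z\in A$.
   Context: This is the multiplication $x\cdot y=\neg(\neg x\oplus\neg y)$ of the basic algebra on $[0,1]$ determined by the antitone involutions $\delta_1(x)=\sqrt{1-x^2}$ on $[0,1]$ and $\delta_a(x)=a-x$ on $[0,a]$ for $a<1$; the claim concerns only the explicit operation given. *)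

From Stdlib Require Import Reals Lra.
Open Scope R_scope.

Definition inA (x : R) : Prop := 0 <= x <= 1.

Definition negA (x : R) : R := sqrt (1 - x ^ 2).

Definition mulA (x y : R) : R :=
  if Rlt_dec y 1 then Rmax (y - negA x) 0 else x.

(* Since (z + ~z)^2 = 1 + 2 z ~z, every z in A satisfies z + ~z >= 1, strictly
   for 0 < z < 1.  The first inequality gives left monotonicity at the jump
   y = 1.  The strict one shows that, for y = 1 - ~x, the set of z with
   x.z <= y is [0,1): it contains every z < 1 but not 1, since x.1 = x > y.
   A half-open interval has no greatest element, so no residual exists. *)
From Stdlib Require Import Reals Lra Psatz.
Open Scope R_scope.

Lemma negA_nonneg (x : R) : 0 <= negA x.
Proof. apply sqrt_pos. Qed.

Lemma negA_sqr (x : R) : inA x -> negA x * negA x = 1 - x * x.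
Proof.
  intros [x_ge0 x_le1]; unfold negA.
  rewrite sqrt_sqrt; [ring | nra].
Qed.

Lemma negA_le1 (x : R) : inA x -> negA x <= 1.
Proof.
  intros Hx; pose proof (negA_sqr x Hx); pose proof (negA_nonneg x).
  destruct Hx; nra.
Qed.

Lemma add_negA_ge1 (x : R) : inA x -> 1 <= x + negA x.
Proof.
  intros Hx; pose proof (negA_sqr x Hx); pose proof (negA_nonneg x).
  destruct Hx; nra.
Qed.

Lemma add_negA_gt1 (x : R) : 0 < x < 1 -> 1 < x + negA x.
Proof.
  intros Hx.
  assert (HxA : inA x) by (unfold inA; lra).
  pose proof (negA_sqr x HxA); pose proof (negA_nonneg x).
  assert (0 < negA x) by nra.
  nra.
Qed.

Lemma mulA1 (x : R) : mulA x 1 = x.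
Proof. unfold mulA; destruct (Rlt_dec 1 1); [lra | reflexivity]. Qed.

Lemma mulA_lt1_le (x z : R) : inA x -> z < 1 -> mulA x z <= 1 - negA x.
Proof.
  intros Hx z_lt1; pose proof (negA_le1 x Hx).
  unfold mulA; destruct (Rlt_dec z 1); [|lra].
  apply Rmax_lub; lra.
Qed.

Lemma mulA_monotone (x y z : R) :
  inA x -> inA y -> inA z -> x <= y -> mulA z x <= mulA z y.
Proof.
  intros Hx Hy Hz x_le_y; pose proof (add_negA_ge1 z Hz).
  unfold inA in *; unfold mulA.
  destruct (Rlt_dec x 1); destruct (Rlt_dec y 1); try lra.
  - apply Rle_max_compat_r; lra.
  - apply Rmax_lub; lra.
Qed.

Lemma no_residual_at (x : R) : 0 < x < 1 ->
  ~ (exists w : R, inA w /\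
       (forall z : R, inA z -> (z <= w <-> mulA x z <= 1 - negA x))).
Proof.
  intros Hx [w [Hw residual]].
  assert (HxA : inA x) by (unfold inA; lra).
  pose proof (add_negA_gt1 x Hx).
  assert (w_lt1 : w < 1).
  { apply Rnot_le_lt; intros w_ge1.
    apply (residual 1) in w_ge1; [|unfold inA; lra].
    rewrite mulA1 in w_ge1; lra. }
  set (z := (w + 1) / 2).
  assert (HzA : inA z) by (unfold inA, z in *; lra).
  assert (z_le_w : z <= w).
  { apply (residual z HzA), mulA_lt1_le; [exact HxA | unfold z; lra]. }
  unfold z in z_le_w; lra.
Qed.

Theorem mainTheorem12 :
  (* (i) left monotonicity *)
  (forall x y z : R, inA x -> inA y -> inA z -> x <= y -> mulA z x <= mulA z y) /\
  (* (ii) no residual for x in (0,1), y = 1 - ~x *)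
  (forall x : R, 0 < x < 1 ->
     ~ (exists w : R, inA w /\
          (forall z : R, inA z -> (z <= w <-> mulA x z <= 1 - negA x)))) /\
  (* in particular: no binary operation \ on A with x.z <= y <-> z <= x\y *)
  ~ (exists ldiv : R -> R -> R,
       (forall x y : R, inA x -> inA y -> inA (ldiv x y)) /\
       (forall x y z : R, inA x -> inA y -> inA z ->
          (mulA x z <= y <-> z <= ldiv x y))).
Proof.
  split; [exact mulA_monotone | split; [exact no_residual_at |]].
  intros [ldiv [ldiv_inA ldiv_residual]].
  set (x := / 2).
  assert (Hx : 0 < x < 1) by (unfold x; lra).
  assert (HxA : inA x) by (unfold inA; lra).
  assert (HyA : inA (1 - negA x))
    by (pose proof (negA_le1 x HxA); pose proof (negA_nonneg x); unfold inA; lra).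
  apply (no_residual_at x Hx).
  exists (ldiv x (1 - negA x)); split; [now apply ldiv_inA |].
  intros z Hz; symmetry; exact (ldiv_residual _ _ _ HxA HyA Hz).
Qed.
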